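(* In the setting described in the context, for each $t$: if $\theta_{t-1}\ge0$, then $p^+_t(\theta_{t-1})\,p^-_t(\theta_{t-1})=0$, i.e. the policy does not charge and discharge simultaneously; equivalently, simultaneous charging and discharging under the policy requires the Lagrangian dual $\theta_{t-1}$ to be negative.
   Context: Efficiency $\eta\in(0,1]$, power limit $P>0$. $O_t:\mathbb{R}\to\mathbb{R}$ convex with (nondecreasing) derivative $o_t$. Define $\varphi_t(x)=\sup\{y\in\mathbb{R}: o_t(y)\le x\}$, $[x]^y_z=\max\{\min\{x,y\},z\}$, and for $x\in\mathbb{R}$ the discharge and charge components $p^+_t(x)=[\varphi_t(-x/\eta)]^P_0$, $p^-_t(x)=[-\varphi_t(-x\eta)]^P_0$. Here $\theta_{t-1}$ is the Lagrange multiplier of the state-of-charge dynamics constraint $e_t-e_{t-1}=-p_t^+/\eta+p_t^-\eta$ in the storage control problem of minimizing $\sum_t O_t(p_t)+C_T(e_T)$ subject to $p_t=p^+_t-p^-_t$, $0\le p^\pm_t\le P$, $0\le e_t\le E$. *)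

From HB Require Import structures.
From mathcomp Require Import all_boot all_order all_algebra.
From mathcomp Require Import all_classical all_reals all_analysis.
Set Implicit Arguments. Unset Strict Implicit. Unset Printing Implicit Defensive.
Import Order.TTheory GRing.Theory Num.Theory.
Import numFieldNormedType.Exports.
Local Open Scope classical_set_scope.
Local Open Scope ring_scope.

(* varphi_t(x) = sup { y in R : o_t(y) <= x }, taken in the extended reals
   (sup of the empty set is -oo, of an unbounded set +oo). *)
Definition varphi (R : realType) (o : R -> R) (x : R) : \bar R :=
  ereal_sup [set (y%:E) | y in [set y : R | o y <= x]].

Definition clip (R : realType) (x : \bar R) (y z : R) : R :=
  fine (maxe (mine x y%:E) z%:E).

Definition pplus (R : realType) (o : R -> R) (eta P x : R) : R :=
  clip (varphi o (- x / eta)) P 0.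

Definition pminus (R : realType) (o : R -> R) (eta P x : R) : R :=
  clip (- varphi o (- x * eta))%E P 0.

(* Whatever o_t is, varphi_t is nondecreasing, being the supremum of a
   growing family of sets. For theta >= 0 and 0 < eta <= 1 we have
   -theta/eta <= -theta*eta, so if varphi_t(-theta/eta) > 0 (discharging)
   then also varphi_t(-theta*eta) > 0, and charging is clipped to 0. *)
From HB Require Import structures.
From mathcomp Require Import all_boot all_order all_algebra.
From mathcomp Require Import all_classical all_reals all_analysis.
Import Order.TTheory GRing.Theory Num.Theory.
Import numFieldNormedType.Exports.
Local Open Scope ring_scope.

Lemma clip_le0 (R : realType) (x : \bar R) (y : R) :
  (x <= 0)%E -> clip x y 0 = 0.
Proof.
move=> x_le0; rewrite /clip max_r //.
by rewrite ge_min x_le0.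
Qed.

Lemma varphi_le (R : realType) (o : R -> R) (a b : R) :
  a <= b -> (varphi o a <= varphi o b)%E.
Proof.
move=> le_ab; apply: ereal_sup_le => _ [y /= oy_le_a <-].
by exists y => //=; apply: le_trans le_ab.
Qed.

Lemma clip_varphi_mul_clip_oppvarphi (R : realType) (o : R -> R) (P a b : R) :
  a <= b -> clip (varphi o a) P 0 * clip (- varphi o b)%E P 0 = 0.
Proof.
move=> le_ab; case: (leP (varphi o a) 0%E) => [phia_le0 | phia_gt0].
  by rewrite clip_le0 ?mul0r.
rewrite [X in _ * X]clip_le0 ?mulr0 // oppe_le0.
by apply: le_trans (ltW phia_gt0) _; apply: varphi_le.
Qed.

Lemma ler_ndivr_mulr (R : realFieldType) (x eta : R) :
  x <= 0 -> 0 < eta -> eta <= 1 -> x / eta <= x * eta.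
Proof.
move=> x_le0 eta_gt0 eta_le1.
rewrite ler_pdivrMr // -mulrA; apply: ler_niMr => //.
have eta_ge0 := ltW eta_gt0.
exact: mulr_ile1.
Qed.

Lemma pplus_mul_pminus (R : realType) (o : R -> R) (eta P x : R) :
  0 < eta -> eta <= 1 -> 0 <= x -> pplus o eta P x * pminus o eta P x = 0.
Proof.
move=> eta_gt0 eta_le1 x_ge0.
apply: clip_varphi_mul_clip_oppvarphi.
by rewrite ler_ndivr_mulr // oppr_le0.
Qed.

Theorem proposition2 (R : realType) (eta P : R) (O o : nat -> R -> R)
  (theta : nat -> R) (t : nat) :
  (0 < t)%N -> 0 < eta -> eta <= 1 -> 0 < P ->
  (forall s (x y l : R), 0 <= l -> l <= 1 ->
     O s (l * x + (1 - l) * y) <= l * O s x + (1 - l) * O s y) ->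
  (forall s (x : R), is_derive x 1 (O s) (o s x)) ->
  (forall s, {homo o s : x y / x <= y}) ->
  0 <= theta t.-1 ->
  pplus (o t) eta P (theta t.-1) * pminus (o t) eta P (theta t.-1) = 0.
Proof.
move=> _ eta_gt0 eta_le1 _ _ _ _ theta_ge0.
exact: pplus_mul_pminus.
Qed.
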